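(* Let $f$, $\mathcal{I}$, and the notation for streams be as in the context, and let $0 < c \le 1$ and $\epsilon > 0$. Let $\mathcal{A}$ be a $c$-compliant algorithm. Let $S_1, S_2, S_3$ be finite streams and suppose $\mathcal{A}(S_1\circ S_2) \le (1+\epsilon)\,\mathcal{A}(S_2)$. Then $$\mathcal{A}(S_2\circ S_3) \ge \frac{c}{2+\epsilon}\, f(\mathtt{OPT}_{123}),$$ where $\mathtt{OPT}_{123}$ is an optimal solution for the stream $S_1\circ S_2\circ S_3$.
   Context: Let $U$ be a finite set of items and $f: 2^U \to \mathbb{R}_{\ge 0}$ a nonnegative submodular function, i.e. $f(A\cup\{v\}) - f(A) \ge f(B\cup\{v\}) - f(B)$ for all $A\subseteq B\subset U$ and $v\in U\setminus B$. Let $\mathcal{I}\subseteq 2^U$ be a hereditary constraint: $A\in\mathcal{I}$ and $A'\subseteq A$ imply $A'\in\mathcal{I}$ (with $\emptyset\in\mathcal{I}$). A stream is a finite sequence of items of $U$; $S_1\circ S_2$ denotes concatenation ($S_1$ followed by $S_2$). For a stream $S$, an optimal solution $\mathtt{OPT}_S$ is a set maximizing $f$ over all sets in $\mathcal{I}$ consisting of items occurring in $S$. An algorithm $\mathcal{A}$ maps each stream $S$ to a set in $\mathcal{I}$ consisting of items occurring in $S$; $\mathcal{A}(S)$ denotes the $f$-value of that set. $\mathcal{A}$ is $c$-compliant if (Monotonicity) whenever $S_1$ is a prefix of $S_2$, $\mathcal{A}(S_1)\le\mathcal{A}(S_2)$; and ($c$-Approximation) for every stream $S$, $\mathcal{A}(S)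 \ge c\cdot f(\mathtt{OPT}_S)$. *)

From HB Require Import structures.
From mathcomp Require Import all_boot all_order all_algebra.
Set Implicit Arguments. Unset Strict Implicit. Unset Printing Implicit Defensive.
Import Order.TTheory GRing.Theory Num.Theory.
Local Open Scope ring_scope.

Section Defs.
Variables (R : realFieldType) (T : finType).

Definition nonneg_fun (f : {set T} -> R) : Prop := forall A, 0 <= f A.

Definition submodular (f : {set T} -> R) : Prop :=
  forall (A B : {set T}) (v : T), A \subset B -> v \notin B ->
    f (v |: B) - f B <= f (v |: A) - f A.

Definition hereditary (I : pred {set T}) : Prop :=
  I set0 /\ forall A A' : {set T}, I A -> A' \subset A -> I A'.

Definition items (S : seq T) : {set T} := [set x | x \in S].

Definition is_opt (f : {set T} -> R) (I : pred {set T}) (S : seq T)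
  (X : {set T}) : Prop :=
  [/\ I X, X \subset items S &
      forall Y : {set T}, I Y -> Y \subset items S -> f Y <= f X].

Definition valid_alg (I : pred {set T}) (alg : seq T -> {set T}) : Prop :=
  forall S, I (alg S) /\ alg S \subset items S.

(* c-compliance; A(S) denotes f (alg S) *)
Definition compliant (f : {set T} -> R) (I : pred {set T}) (c : R)
  (alg : seq T -> {set T}) : Prop :=
  (forall S1 S2 : seq T, prefix S1 S2 -> f (alg S1) <= f (alg S2)) /\
  (forall (S : seq T) (X : {set T}), is_opt f I S X -> c * f X <= f (alg S)).

End Defs.

(** Split the optimum [O] of [S1 ++ S2 ++ S3] into its items occurring in [S1]
    and the rest.  The first part is feasible for [S1 ++ S2], the second for
    [S2 ++ S3], so by subadditivity of nonnegative submodular functions and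
    [c]-approximation, [c f(O) <= A(S1 ++ S2) + A(S2 ++ S3)].  The hypothesis
    bounds the first term by [(1 + eps) A(S2)], and monotonicity bounds [A(S2)]
    by [A(S2 ++ S3)]. *)
From HB Require Import structures.
From mathcomp Require Import all_boot all_order all_algebra.
From mathcomp Require Import lra.
Set Implicit Arguments. Unset Strict Implicit. Unset Printing Implicit Defensive.
Import Order.TTheory GRing.Theory Num.Theory.
Local Open Scope ring_scope.

Lemma items_cat (T : finType) (s1 s2 : seq T) :
  items (s1 ++ s2) = items s1 :|: items s2.
Proof. by apply/setP => x; rewrite !inE mem_cat. Qed.

Section Submodular.
Variables (R : realFieldType) (T : finType) (f : {set T} -> R).
Hypotheses (f_ge0 : nonneg_fun f) (f_submod : submodular f).

Lemma submod_disjointU_le (X Y : {set T}) :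
  [disjoint X & Y] -> f (X :|: Y) <= f X + f Y.
Proof.
move cardY: #|Y| => n; elim: n Y cardY => [|n IH] Y cardY dXY.
  by move/eqP: cardY; rewrite cards_eq0 => /eqP ->; rewrite setU0 lerDl.
have [v Yv] : exists v, v \in Y.
  by apply/set0Pn; apply: contra_eqN cardY => /eqP ->; rewrite cards0.
set Y' := Y :\ v.
have cardY' : #|Y'| = n by move: cardY; rewrite (cardsD1 v) Yv => -[].
have dXY' : [disjoint X & Y'] by apply: disjointWr dXY; apply: subsetDl.
have vXY' : v \notin X :|: Y'.
  rewrite in_setU in_setD1 eqxx orbF; apply: contraL Yv => Xv.
  by rewrite (disjointFr dXY Xv).
have gain := f_submod (subsetUr X Y') vXY'.
have IH' := IH Y' cardY' dXY'.
rewrite -(setD1K Yv) setUCA -/Y'; lra.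
Qed.

End Submodular.

Section Compliance.
Variables (R : realFieldType) (T : finType) (f : {set T} -> R).
Variables (I : pred {set T}) (c : R) (alg : seq T -> {set T}).
Hypotheses (I_hered : hereditary I) (c_ge0 : 0 <= c).
Hypothesis alg_compliant : compliant f I c alg.

Lemma is_opt_exists (S : seq T) : exists X, is_opt f I S X.
Proof.
set feasible := fun Y => I Y && (Y \subset items S).
have feasible0 : feasible set0 by rewrite /feasible I_hered.1 sub0set.
have [X /andP[IX XS] Xmax] := arg_maxP f feasible0.
by exists X; split=> // Y IY YS; apply: Xmax; rewrite /feasible IY YS.
Qed.

Lemma compliant_feasible_le (S : seq T) (Y : {set T}) :
  I Y -> Y \subset items S -> c * f Y <= f (alg S).
Proof.
move=> IY YS; have [X optX] := is_opt_exists S; have [_ _ Xmax] := optX.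
apply: le_trans (alg_compliant.2 S X optX).
by rewrite ler_wpM2l // Xmax.
Qed.

End Compliance.

Theorem lemma1 (R : realFieldType) (T : finType) (f : {set T} -> R)
  (I : pred {set T}) (c eps : R) (alg : seq T -> {set T})
  (S1 S2 S3 : seq T) (O123 : {set T}) :
  nonneg_fun f -> submodular f -> hereditary I ->
  0 < c -> c <= 1 -> 0 < eps ->
  valid_alg I alg -> compliant f I c alg ->
  f (alg (S1 ++ S2)) <= (1 + eps) * f (alg S2) ->
  is_opt f I (S1 ++ S2 ++ S3) O123 ->
  c / (2 + eps) * f O123 <= f (alg (S2 ++ S3)).
Proof.
move=> f_ge0 f_submod I_hered c_gt0 _ eps_gt0 _ alg_compl A12_le [IO OS _].
have c_ge0 := ltW c_gt0.
set X := O123 :&: items S1; set Y := O123 :\: items S1.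
have splitO : f O123 <= f X + f Y.
  rewrite -{1}(setID O123 (items S1)); apply: submod_disjointU_le => //.
  by rewrite -setI_eq0 setDE setIACA setICr setI0.
have AX : c * f X <= f (alg (S1 ++ S2)).
  apply: (compliant_feasible_le I_hered c_ge0 alg_compl).
    exact: I_hered.2 IO (subsetIl _ _).
  by rewrite items_cat subsetU // subsetIr.
have AY : c * f Y <= f (alg (S2 ++ S3)).
  apply: (compliant_feasible_le I_hered c_ge0 alg_compl).
    exact: I_hered.2 IO (subsetDl _ _).
  by rewrite subDset -items_cat.
have A2_le : f (alg S2) <= f (alg (S2 ++ S3)).
  by apply: alg_compl.1; apply: prefix_prefix.
have cO : c * f O123 <= c * f X + c * f Y by rewrite -mulrDr ler_wpM2l.
have eps2_gt0 : 0 < 2 + eps by rewrite addr_gt0.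
rewrite mulrAC ler_pdivrMr //; nra.
Qed.
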